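(* Let $m\in\mathbb{N}$ and let $f$ be a multiplicative function with $f(p)\to1$ as $p\to\infty$ over primes. (a) If $\epsilon>0$, $(x_n)_{n\in\mathbb{N}}\subset[1,+\infty)$, and $\sum_{p:\,f(p)>1}(f(p)-1)=\infty$, then there exists a sequence $(a_n)_{n\in\mathbb{N}}$ of pairwise coprime positive integers such that $|f(a_n)-x_n|<\epsilon$ and $\gcd(a_n,m)=1$ for all $n\in\mathbb{N}$. (b) If $\epsilon>0$, $(x_n)_{n\in\mathbb{N}}\subset[0,1]$, and $\sum_{p:\,f(p)<1}(1-f(p))=\infty$, then there exists a sequence $(a_n)_{n\in\mathbb{N}}$ of pairwise coprime positive integers such that $|f(a_n)-x_n|<\epsilon$ and $\gcd(a_n,m)=1$ for all $n\in\mathbb{N}$.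
   Context: A multiplicative function satisfies $f(1)=1$ and $f(ab)=f(a)f(b)$ whenever $\gcd(a,b)=1$. Sums indexed by $p$ run over primes. *)

From HB Require Import structures.
From mathcomp Require Import all_boot all_order all_algebra.
From mathcomp Require Import reals.
Set Implicit Arguments. Unset Strict Implicit. Unset Printing Implicit Defensive.
Import Order.TTheory GRing.Theory Num.Theory.
Local Open Scope ring_scope.

Definition multiplicative_fn (R : realType) (f : nat -> R) : Prop :=
  f 1%N = 1 /\ forall a b : nat, coprime a b -> f (a * b)%N = f a * f b.

Definition tends_to_one_on_primes (R : realType) (f : nat -> R) : Prop :=
  forall e : R, 0 < e -> exists N : nat,
    forall p : nat, prime p -> (N <= p)%N -> `|f p - 1| < e.

(* sum_{p prime, f p > 1} (f p - 1) = +oo  (nonnegative terms: partial sums unbounded) *)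
Definition sum_excess_diverges (R : realType) (f : nat -> R) : Prop :=
  forall B : R, exists N : nat,
    B < \sum_(p < N | prime p && (1 < f p)) (f p - 1).

Definition sum_deficit_diverges (R : realType) (f : nat -> R) : Prop :=
  forall B : R, exists N : nat,
    B < \sum_(p < N | prime p && (f p < 1)) (1 - f p).

Definition pairwise_coprime (a : nat -> nat) : Prop :=
  forall i j : nat, i != j -> coprime (a i) (a j).

From HB Require Import structures.
From mathcomp Require Import all_boot all_order all_algebra.
From mathcomp Require Import reals.
From mathcomp Require Import boolp lra zify.
Import Order.TTheory GRing.Theory Num.Theory.
Local Open Scope ring_scope.

(* Proof of Lemma 2.2.  Each a_n is a product of distinct primes taken from
   a "window" [L, K): the product of f over the primes p in [L, K) with
   f p > 1 (part (a)) or f p < 1 (part (b)).  For a window starting beyond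
   the point where |f p - 1| is small, this product starts at 1, moves by
   factors close to 1 as K grows, and eventually exceeds every bound (a) or
   falls below every positive bound (b), because
     prod (1 + t_p) >= 1 + sum t_p   and   prod (1 - t_p) * (1 + sum t_p) <= 1.
   Hence it must at some K first enter the eps-neighbourhood of the target
   (a discrete intermediate value argument).  The file develops:
   - a coprimality criterion and the window products of primes;
   - the two product/sum inequalities and a first-crossing lemma on reals;
   - the approximation of one target x by one window (parts (a) and (b));
   - the assembly of a sequence whose windows lie beyond each other and
     beyond m, which makes the terms pairwise coprime and coprime to m. *)

Lemma coprime_no_common_prime (a b : nat) : (0 < a)%N -> (0 < b)%N ->
  (forall p, prime p -> (p %| a)%N -> (p %| b)%N -> False) -> coprime a b.
Proof.
move=> a_gt0 b_gt0 no_common; rewrite coprime_has_primes //; apply/hasPn => p.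
rewrite !mem_primes a_gt0 b_gt0 /= => /andP [p_prime p_dvd_b].
by apply/negP => /andP [_ p_dvd_a]; apply: no_common p_dvd_b.
Qed.

Section PrimeWindows.
Variables (R : realType) (f : nat -> R).
Hypothesis f_mult : multiplicative_fn f.

Lemma multiplicative_prod_primes (s : seq nat) : uniq s -> all prime s ->
  f (\prod_(p <- s) p)%N = \prod_(p <- s) f p.
Proof.
case: f_mult => f1 fM; elim: s => [|q s IH]; first by rewrite !big_nil f1.
rewrite /= => /andP [q_s uniq_s] /andP [q_prime primes_s].
rewrite !big_cons fM ?IH // prime_coprime // Euclid_dvd_prod // big_has.
apply/hasPn => p p_s; rewrite dvdn_prime2 //; last exact: (allP primes_s).
by apply: contraNN q_s => /eqP q_eq_p; rewrite q_eq_p.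
Qed.

Definition prime_window (c : pred nat) (L K : nat) : nat :=
  (\prod_(L <= p < K | prime p && c p) p)%N.

Lemma prime_window_gt0 (c : pred nat) (L K : nat) : (0 < prime_window c L K)%N.
Proof. by apply: prodn_cond_gt0 => p /andP [/prime_gt0]. Qed.

Lemma prime_window_primes (c : pred nat) (L K p : nat) :
  (p %| prime_window c L K)%N -> prime p -> (L <= p)%N.
Proof.
move=> + p_prime; rewrite Euclid_dvd_prod // big_has_cond.
case/hasP => q; rewrite mem_index_iota => /andP [Lq _].
move=> /andP [/andP [q_prime _]].
by rewrite dvdn_prime2 // => /eqP ->.
Qed.

Lemma f_prime_window (c : pred nat) (L K : nat) :
  f (prime_window c L K) = \prod_(L <= p < K | prime p && c p) f p.
Proof.
rewrite /prime_window -big_filter multiplicative_prod_primes ?big_filter //.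
  by rewrite filter_uniq // iota_uniq.
by rewrite all_filter; apply/allP => p _; apply/implyP => /andP [].
Qed.

End PrimeWindows.

Lemma prod_1D_ge (R : realDomainType) (I : Type) (r : seq I) (P : pred I)
    (t : I -> R) : (forall i, P i -> 0 <= t i) ->
  1 + \sum_(i <- r | P i) t i <= \prod_(i <- r | P i) (1 + t i).
Proof.
move=> t_ge0; elim: r => [|i r IH]; first by rewrite !big_nil addr0.
rewrite !big_cons; case: ifP => // Pi.
have := t_ge0 i Pi; have : 0 <= \sum_(j <- r | P j) t j by exact: sumr_ge0.
by move: IH; nra.
Qed.

(* Dual inequality: prod (1 - t_i) * (1 + sum t_i) <= 1 for t_i in [0, 1],
   together with the nonnegativity of the product it needs inductively. *)
Lemma prod_1B_mul_le (R : realDomainType) (I : eqType) (r : seq I)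
    (P : pred I) (t : I -> R) :
  (forall i, i \in r -> P i -> 0 <= t i <= 1) ->
  0 <= \prod_(i <- r | P i) (1 - t i) /\
  \prod_(i <- r | P i) (1 - t i) * (1 + \sum_(i <- r | P i) t i) <= 1.
Proof.
elim: r => [|i r IH] t_01; first by rewrite !big_nil addr0 mulr1; lra.
have t_01_r j : j \in r -> P j -> 0 <= t j <= 1.
  by move=> j_r; apply: t_01; rewrite inE j_r orbT.
have [prod_ge0 prod_le] := IH t_01_r.
have sum_ge0 : 0 <= \sum_(j <- r | P j) t j.
  rewrite big_seq_cond; apply: sumr_ge0 => j /andP [j_r Pj].
  by have /andP [] := t_01_r j j_r Pj.
rewrite !big_cons; case: ifP => // Pi.
have /andP [ti_ge0 ti_le1] := t_01 i (mem_head _ _) Pi.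
have prod_le1 : \prod_(j <- r | P j) (1 - t j) <= 1 by nra.
split; nra.
Qed.

Lemma tail_sum_unbounded {R : realDomainType} {g : nat -> R} {c : pred nat} :
  (forall p, c p -> 0 <= g p) ->
  (forall B, exists N, B < \sum_(p < N | c p) g p) ->
  forall B L, exists K, (L <= K)%N /\ B < \sum_(L <= p < K | c p) g p.
Proof.
move=> g_ge0 diverges B L.
have [N sum_N] := diverges (B + \sum_(p < L | c p) g p).
exists (maxn N L); split; first exact: leq_maxr.
have grow : \sum_(0 <= p < N | c p) g p <= \sum_(0 <= p < maxn N L | c p) g p.
  by rewrite (big_cat_nat (leq0n N) (leq_maxl N L)) /= lerDl sumr_ge0.
move: sum_N grow; rewrite -!big_mkord (big_cat_nat (leq0n L) (leq_maxr N L)) /=.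
lra.
Qed.

Lemma first_crossing (R : realDomainType) (u : nat -> R) (lo hi : R) (L : nat) :
  u L < hi -> (exists K, (L <= K)%N /\ lo < u K) ->
  (forall k, (L <= k)%N -> u k <= lo -> u k.+1 < hi) ->
  exists K, (L <= K)%N /\ lo < u K < hi.
Proof.
move=> start [K1 [LK1 lo_K1]] small_step.
have crosses : exists K, (L <= K)%N && (lo < u K) by exists K1; rewrite LK1.
case: (ex_minnP crosses) => K /andP [LK lo_K] K_min.
exists K; split => //; rewrite lo_K /=.
have [-> //|K_neq_L] := eqVneq K L.
have : (L < K)%N by rewrite ltn_neqAle eq_sym K_neq_L LK.
case: K {LK lo_K K_neq_L} K_min => // k K_min /[!ltnS] Lk.
apply: (small_step _ Lk); rewrite leNgt; apply/negP => lo_k.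
by have := K_min k; rewrite Lk lo_k ltnn => /(_ isT).
Qed.

Lemma first_crossing_down (R : realDomainType) (u : nat -> R) (lo hi : R)
    (L : nat) :
  lo < u L -> (exists K, (L <= K)%N /\ u K < hi) ->
  (forall k, (L <= k)%N -> hi <= u k -> lo < u k.+1) ->
  exists K, (L <= K)%N /\ lo < u K < hi.
Proof.
move=> start [K1 [LK1 hi_K1]] small_step.
have [K [LK /andP [lo_K hi_K]]] : exists K, (L <= K)%N /\ - hi < - u K < - lo.
  apply: first_crossing; first by rewrite ltrN2.
    by exists K1; rewrite ltrN2.
  by move=> k Lk; rewrite lerN2 ltrN2; apply: small_step.
by exists K; split => //; apply/andP; split; lra.
Qed.

Section Approximation.
Variables (R : realType) (f : nat -> R).
Hypotheses (f_mult : multiplicative_fn f) (f_to_one : tends_to_one_on_primes f).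

(* Part (a) for one target: x >= 1 is approximated by f at a product of
   primes p >= L with f p > 1.  Beyond N, f p < 1 + eps / x, so while the
   window product is <= x - eps, one more factor keeps it below x + eps. *)
Lemma approx_above (x eps : R) (L : nat) :
  sum_excess_diverges f -> 0 < eps -> 1 <= x ->
  exists a, (0 < a)%N /\ (forall p, prime p -> (p %| a)%N -> (L <= p)%N) /\
    `|f a - x| < eps.
Proof.
move=> diverges eps_gt0 x_ge1.
pose c p := 1 < f p.
pose d := eps / x.
have d_gt0 : 0 < d by rewrite divr_gt0 //; lra.
have d_x : x * d = eps by rewrite /d mulrC divfK // gt_eqF //; lra.
have [N f_near1] := f_to_one d d_gt0.
pose L' := maxn L N.
pose P K := \prod_(L' <= p < K | prime p && c p) f p.
pose S K := \sum_(L' <= p < K | prime p && c p) (f p - 1).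
have excess_ge0 p : prime p && c p -> 0 <= f p - 1.
  by case/andP => _; rewrite /c; lra.
have S_ge0 K : 0 <= S K by apply: sumr_ge0.
have P_ge K : 1 + S K <= P K.
  have -> : P K = \prod_(L' <= p < K | prime p && c p) (1 + (f p - 1)).
    by apply: eq_bigr => p _; rewrite addrC subrK.
  exact: prod_1D_ge.
have [K [L'K /andP [P_lo P_hi]]] :
    exists K, (L' <= K)%N /\ x - eps < P K < x + eps.
  apply: first_crossing; first by rewrite /P big_geq //; lra.
    have [K1 [L'K1 S_K1]] := tail_sum_unbounded excess_ge0 diverges (x - 1) L'.
    by exists K1; split => //; have := P_ge K1; rewrite /S; lra.
  move=> k L'k P_k; rewrite /P big_mkcond big_nat_recr //= -big_mkcond -/(P k).
  case: ifP => [/andP [k_prime _]|_]; last by rewrite mulr1; lra.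
  have := f_near1 k k_prime (leq_trans (leq_maxr L N) L'k).
  rewrite ltr_norml => /andP [_ f_k].
  have P_k_gt0 : 0 < P k by have := P_ge k; have := S_ge0 k; lra.
  have : P k * f k < P k * (1 + d) by rewrite ltr_pM2l //; lra.
  have : P k * (1 + d) <= x * (1 + d) by rewrite ler_pM2r; lra.
  have : x * (1 + d) = x + eps by rewrite mulrDr mulr1 d_x.
  lra.
exists (prime_window c L' K); split; first exact: prime_window_gt0.
split.
  move=> p p_prime /prime_window_primes /(_ p_prime).
  exact: leq_trans (leq_maxl L N).
by rewrite f_prime_window // -/(P K) ltr_norml; apply/andP; split; lra.
Qed.

(* Part (b) for one target: x in [0, 1] is approximated by f at a product
   of primes p >= L with f p < 1.  Beyond the chosen bound 0 < f p and
   f p > 1 - eps, so while the window product (which stays in [0, 1]) is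
   >= x + eps, one more factor keeps it above x - eps. *)
Lemma approx_below (x eps : R) (L : nat) :
  sum_deficit_diverges f -> 0 < eps -> 0 <= x <= 1 ->
  exists a, (0 < a)%N /\ (forall p, prime p -> (p %| a)%N -> (L <= p)%N) /\
    `|f a - x| < eps.
Proof.
move=> diverges eps_gt0 /andP [x_ge0 x_le1].
pose c p := f p < 1.
have [N1 f_near1] := f_to_one eps eps_gt0.
have [N2 f_pos] := f_to_one 1 ltr01.
pose L' := maxn L (maxn N1 N2).
pose P K := \prod_(L' <= p < K | prime p && c p) f p.
pose S K := \sum_(L' <= p < K | prime p && c p) (1 - f p).
have deficit_ge0 p : prime p && c p -> 0 <= 1 - f p.
  by case/andP => _; rewrite /c; lra.
have S_ge0 K : 0 <= S K by apply: sumr_ge0.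
have P_bounds K : 0 <= P K /\ P K * (1 + S K) <= 1.
  have -> : P K = \prod_(L' <= p < K | prime p && c p) (1 - (1 - f p)).
    by apply: eq_bigr => p _; rewrite opprB addrC subrK.
  apply: prod_1B_mul_le => p; rewrite mem_index_iota => /andP [L'p _].
  case/andP => p_prime; rewrite /c => f_p_lt1; apply/andP; split; first lra.
  have N2_p : (N2 <= p)%N by lia.
  have := f_pos p p_prime N2_p.
  by rewrite ltr_norml => /andP [f_p_gt0 _]; lra.
have P_le1 K : P K <= 1 by have [] := P_bounds K; have := S_ge0 K; nra.
have [K [L'K /andP [P_lo P_hi]]] :
    exists K, (L' <= K)%N /\ x - eps < P K < x + eps.
  apply: first_crossing_down; first by rewrite /P big_geq //; lra.
    have xe_gt0 : 0 < x + eps by lra.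
    have [K1 [L'K1 S_K1]] :=
      tail_sum_unbounded deficit_ge0 diverges (x + eps)^-1 L'.
    exists K1; split => //; rewrite ltNge; apply/negP => P_K1.
    have : 1 < (x + eps) * S K1.
      by rewrite -(mulfV (lt0r_neq0 xe_gt0)) ltr_pM2l.
    by have [] := P_bounds K1; have := S_ge0 K1; nra.
  move=> k L'k P_k; rewrite /P big_mkcond big_nat_recr //= -big_mkcond -/(P k).
  case: ifP => [/andP [k_prime _]|_]; last by rewrite mulr1; lra.
  have N1_k : (N1 <= k)%N by lia.
  have := f_near1 k k_prime N1_k.
  rewrite ltr_norml => /andP [f_k _].
  have : P k * (1 - eps) <= P k * f k by rewrite ler_wpM2l //; lra.
  by have := P_le1 k; have [] := P_bounds k; nra.
exists (prime_window c L' K); split; first exact: prime_window_gt0.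
split.
  move=> p p_prime /prime_window_primes /(_ p_prime).
  exact: leq_trans (leq_maxl L _).
by rewrite f_prime_window // -/(P K) ltr_norml; apply/andP; split; lra.
Qed.

End Approximation.

(* Each term is
   chosen with prime factors beyond m and beyond all earlier terms. *)
Lemma coprime_sequence {m : nat} (Q : nat -> nat -> Prop) : (0 < m)%N ->
  (forall n L, exists a, (0 < a)%N /\
      (forall p, prime p -> (p %| a)%N -> (L <= p)%N) /\ Q n a) ->
  exists a : nat -> nat, pairwise_coprime a /\
    forall n, (0 < a n)%N /\ Q n (a n) /\ coprime (a n) m.
Proof.
move=> m_gt0 meet.
pose choose n L := proj1_sig (cid (meet n L)).
have chooseP n L := proj2_sig (cid (meet n L)).
pose B := fix B n := if n is k.+1 then (B k + choose k (B k)).+1 else m.+1.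
pose a n := choose n (B n).
have a_gt0 n : (0 < a n)%N by case: (chooseP n (B n)).
have a_primes n p : prime p -> (p %| a n)%N -> (B n <= p < B n.+1)%N.
  move=> p_prime p_dvd; case: (chooseP n (B n)) => _ [above_L _].
  rewrite above_L //= ltnS; apply: leq_trans (dvdn_leq (a_gt0 n) p_dvd) _.
  exact: leq_addl.
have B_mono : {homo B : i j / (i <= j)%N}.
  apply: homo_leq => [//|y x z|i]; first exact: leq_trans.
  exact: leqW (leq_addr _ _).
exists a; split.
  move=> i j; wlog lt_ij : i j / (i < j)%N.
    move=> W ne_ij; case: (ltngtP i j) => [lt|gt|eq]; first exact: W.
      by rewrite coprime_sym W // eq_sym.
    by rewrite eq eqxx in ne_ij.
  move=> _; apply: coprime_no_common_prime => // p p_prime p_i p_j.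
  have /andP [_ lt_i] := a_primes i p p_prime p_i.
  have /andP [ge_j _] := a_primes j p p_prime p_j.
  by have := B_mono _ _ lt_ij; lia.
move=> n; split; first exact: a_gt0.
split; first by case: (chooseP n (B n)) => _ [].
apply: coprime_no_common_prime => // p p_prime p_n p_m.
have /andP [ge_n _] := a_primes n p p_prime p_n.
have B0_le : (m.+1 <= B n)%N by exact: (B_mono 0%N n).
by have := dvdn_leq m_gt0 p_m; lia.
Qed.

Theorem lemma2p2 (R : realType) (m : nat) (f : nat -> R) :
  (0 < m)%N -> multiplicative_fn f -> tends_to_one_on_primes f ->
  (forall (eps : R) (x : nat -> R),
      0 < eps -> (forall n, 1 <= x n) -> sum_excess_diverges f ->
      exists a : nat -> nat,
        pairwise_coprime a /\
        forall n, (0 < a n)%N /\ `|f (a n) - x n| < eps /\ coprime (a n) m)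
  /\
  (forall (eps : R) (x : nat -> R),
      0 < eps -> (forall n, 0 <= x n <= 1) -> sum_deficit_diverges f ->
      exists a : nat -> nat,
        pairwise_coprime a /\
        forall n, (0 < a n)%N /\ `|f (a n) - x n| < eps /\ coprime (a n) m).
Proof.
move=> m_gt0 f_mult f_to_one; split=> eps x eps_gt0 x_range diverges;
  apply: (coprime_sequence (fun n a => `|f a - x n| < eps) m_gt0) => n L.
  exact: approx_above.
exact: approx_below.
Qed.
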